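(* Let $p,q$ be coprime positive integers with $\frac pq<\frac12$, and let $1\le k\le q-2p-2$. Then $P_{k,\frac pq}\triangleleft P_{k+1,\frac pq}$, i.e. $H_2(M_k)>H_2(M_{k+1})$ and $H_2(m_k)>H_2(m_{k+1})$, where $M_r,m_r$ denote the points of absolute maximum and absolute minimum of $P_{r,\frac pq}$.
   Context: $H_2:[0,1]\to[0,1]$ is $H_2(x)=3x$ on $I_0=[0,\frac13]$, $2-3x$ on $I_1=[\frac13,\frac23]$, $3x-2$ on $I_2=[\frac23,1]$. For coprime $p,q$ with $0<\frac pq<\frac12$ and $r\in\{0,1,\dots,q-2p\}$, $\Gamma_{r,\frac pq}$ is the bimodal over-twist pattern whose cyclic permutation $\Pi_{r,\frac pq}$ of $\{1,\dots,q\}$ (action on the points of the cycle labelled $x_1<\dots<x_q$) is: $j\mapsto j+p$ for $1\le j\le r$; $j\mapsto q-j+r+1$ for $r+1\le j\le r+p$; $j\mapsto 2p-j+r+1$ for $r+p+1\le j\le r+2p$; $j\mapsto j-p$ for $r+2p+1\le j\le q$. $P_{r,\frac pq}$ denotes the cycle of $H_2$ exhibiting $\Gamma_{r,\frac pq}$ singled out by the location of its extremal points as follows (the paper asserts it is unique): for $r=0$ and $r=q-2p$ its points $M_r,m_r$ lie in $I_1$, and for $1\le r\le q-2p-1$, $M_r\in I_1$ and $m_r\in I_2$. Here the point of absolute maximum $M_r$ (resp. absolute minimum $m_r$) of a cycle $P$ is the point of $P$ whose image under $H_2$ is the largest (resp. smallest) point of $P$. For two such cycles, $P_{r_2,\frac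 pq}\triangleleft P_{r_1,\frac pq}$ (''$P_{r_2,\frac pq}$ floats above $P_{r_1,\frac pq}$'') means $H_2(M_{r_2})>H_2(M_{r_1})$ and $H_2(m_{r_2})>H_2(m_{r_1})$. *)

From Stdlib Require Import Reals Lra Lia Arith.
Open Scope R_scope.

Definition H2 (x : R) : R :=
  if Rle_dec x (1/3) then 3 * x
  else if Rle_dec x (2/3) then 2 - 3 * x
  else 3 * x - 2.

Definition in_I0 (x : R) : Prop := 0 <= x <= 1/3.
Definition in_I1 (x : R) : Prop := 1/3 <= x <= 2/3.
Definition in_I2 (x : R) : Prop := 2/3 <= x <= 1.

(* The cyclic permutation Pi_{r,p/q} of {1,...,q} (1-based labels). *)
Definition Pi (q p r j : nat) : nat :=
  if Nat.leb j r then j + p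
  else if Nat.leb j (r + p) then q - j + r + 1
  else if Nat.leb j (r + 2 * p) then (2 * p + r + 1) - j
  else j - p.

(* x_1 < ... < x_q (x : nat -> R, only indices 1..q matter) is a cycle of
   H_2 exhibiting the pattern Gamma_{r,p/q}: H_2(x_j) = x_{Pi(j)}. *)
Definition exhibits (q p r : nat) (x : nat -> R) : Prop :=
  (forall j, (1 <= j <= q)%nat -> 0 <= x j <= 1) /\
  (forall i j, (1 <= i)%nat -> (i < j)%nat -> (j <= q)%nat -> x i < x j) /\
  (forall j, (1 <= j <= q)%nat -> H2 (x j) = x (Pi q p r j)).

(* Point of absolute maximum / minimum of the cycle {x_1,...,x_q}: the point
   of the cycle whose image under H_2 is the largest / smallest point. *)
Definition abs_max_pt (q : nat) (x : nat -> R) (y : R) : Prop :=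
  exists j, (1 <= j <= q)%nat /\ y = x j /\ H2 y = x q.
Definition abs_min_pt (q : nat) (x : nat -> R) (y : R) : Prop :=
  exists j, (1 <= j <= q)%nat /\ y = x j /\ H2 y = x 1%nat.

Definition is_P (q p r : nat) (x : nat -> R) : Prop :=
  exhibits q p r x /\
  (forall M m, abs_max_pt q x M -> abs_min_pt q x m ->
     ((r = 0 \/ r = q - 2 * p)%nat -> in_I1 M /\ in_I1 m) /\
     ((1 <= r <= q - 2 * p - 1)%nat -> in_I1 M /\ in_I2 m)).

From Stdlib Require Import Reals Arith Lra Lia ZArith Znumtheory Wf_nat.
Open Scope R_scope.

(* For 1 <= r <= q-2p-1 the cycle P_{r,p/q} = {x_1 < ... < x_q} has
   M_r = x_{r+1} and m_r = x_{r+2p}, and the located extrema force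
   x_1..x_r into I_0, x_{r+1}..x_{r+2p-1} into I_1 and x_{r+2p}..x_q into I_2,
   so H_2 moves labels by +p in I_0, by -p in I_2 and reflects them in I_1.
   Let x = P_k and y = P_{k+1}.  When x_j and y_j (or x_i and y_{i+1}) lie on a
   common branch of H_2, their order is inherited from (or, on I_1, reversed
   with respect to) the order of their images, which is again a pair of one of
   these two kinds.  Following images from (x_q, y_q), resp. (x_1, y_1), one
   full round through the three branches shifts the residue of the label mod p
   by q, resp. -q; since gcd(p,q) = 1 the chain reaches, within p rounds, one
   of the labels k+1, k+2p, k+2p+1, where x and y lie on different branches
   (or close to their boundaries) and y < x is read off directly.  Hence
   H_2(M_k) = x_q > y_q = H_2(M_{k+1}) and H_2(m_k) = x_1 > y_1 = H_2(m_{k+1}). *)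

Lemma H2_I0 x : x <= 1/3 -> H2 x = 3 * x.
Proof. intros; unfold H2; destruct (Rle_dec x (1/3)); lra. Qed.

Lemma H2_I1 x : 1/3 <= x <= 2/3 -> H2 x = 2 - 3 * x.
Proof. intros; unfold H2; destruct (Rle_dec x (1/3)); [|destruct (Rle_dec x (2/3))]; lra. Qed.

Lemma H2_I2 x : 2/3 <= x -> H2 x = 3 * x - 2.
Proof. intros; unfold H2; destruct (Rle_dec x (1/3)); [|destruct (Rle_dec x (2/3))]; lra. Qed.

Section PiBranches.

Local Open Scope nat_scope.
Variables q p r j : nat.

Ltac unfold_Pi :=
  unfold Pi; repeat match goal with |- context [Nat.leb ?a ?b] => destruct (Nat.leb_spec a b) end;
  lia.

Lemma Pi_I0 : 1 <= j <= r -> Pi q p r j = j + p.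
Proof. intros; unfold_Pi. Qed.

Lemma Pi_refl1 : r + 1 <= j <= r + p -> Pi q p r j = q - j + r + 1.
Proof. intros; unfold_Pi. Qed.

Lemma Pi_refl2 : r + p + 1 <= j <= r + 2 * p -> Pi q p r j = 2 * p + r + 1 - j.
Proof. intros; unfold_Pi. Qed.

Lemma Pi_I2 : r + 2 * p + 1 <= j -> Pi q p r j = j - p.
Proof. intros; unfold_Pi. Qed.

End PiBranches.

Set Implicit Arguments.
Record overtwist_shape (q p r : nat) (x : nat -> R) : Prop := {
  shape_bound : forall j, (1 <= j <= q)%nat -> 0 <= x j <= 1;
  shape_incr : forall i j, (1 <= i)%nat -> (i < j)%nat -> (j <= q)%nat -> x i < x j;
  shape_I0 : forall j, (1 <= j <= r)%nat -> x (j + p)%nat = 3 * x j;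
  shape_refl1 : forall j, (r + 1 <= j <= r + p)%nat -> x (q - j + r + 1)%nat = 2 - 3 * x j;
  shape_refl2 : forall j, (r + p + 1 <= j <= r + 2 * p - 1)%nat ->
    x (2 * p + r + 1 - j)%nat = 2 - 3 * x j;
  shape_I2 : forall j, (r + 2 * p + 1 <= j <= q)%nat -> x (j - p)%nat = 3 * x j - 2;
  shape_min : x 1%nat = 3 * x (r + 2 * p)%nat - 2;
  shape_max_I1 : 1/3 <= x (r + 1)%nat;
  shape_min_I2 : 2/3 <= x (r + 2 * p)%nat }.
Unset Implicit Arguments.

Section CycleShape.

Variables (q p r : nat) (x : nat -> R).
Hypotheses (p_pos : (0 < p)%nat) (r_pos : (1 <= r)%nat) (q_large : (r + 2 * p + 1 <= q)%nat).
Hypothesis Px : is_P q p r x.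

Lemma is_P_orbit j : (1 <= j <= q)%nat -> H2 (x j) = x (Pi q p r j).
Proof. destruct Px as [[_ [_ orbit]] _]; exact (orbit j). Qed.

Lemma is_P_lt i j : (1 <= i)%nat -> (i < j)%nat -> (j <= q)%nat -> x i < x j.
Proof. destruct Px as [[_ [incr _]] _]; exact (incr i j). Qed.

Lemma is_P_le i j : (1 <= i)%nat -> (i <= j)%nat -> (j <= q)%nat -> x i <= x j.
Proof.
  intros; destruct (Nat.eq_dec i j) as [-> | Hij]; [lra |].
  left; apply is_P_lt; lia.
Qed.

Lemma is_P_max_image : H2 (x (r + 1)%nat) = x q.
Proof. rewrite is_P_orbit, Pi_refl1 by lia; f_equal; lia. Qed.

Lemma is_P_min_image : H2 (x (r + 2 * p)%nat) = x 1%nat.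
Proof. rewrite is_P_orbit, Pi_refl2 by lia; f_equal; lia. Qed.

Lemma is_P_extrema_location : in_I1 (x (r + 1)%nat) /\ in_I2 (x (r + 2 * p)%nat).
Proof.
  destruct Px as [_ loc].
  assert (HM : abs_max_pt q x (x (r + 1)%nat))
    by (exists (r + 1)%nat; repeat split; [lia | lia | apply is_P_max_image]).
  assert (Hm : abs_min_pt q x (x (r + 2 * p)%nat))
    by (exists (r + 2 * p)%nat; repeat split; [lia | lia | apply is_P_min_image]).
  apply (loc _ _ HM Hm); lia.
Qed.

Lemma is_P_I0 j : (1 <= j <= r)%nat -> x j <= 1/3.
Proof.
  intros Hj; destruct is_P_extrema_location as [[_ HM] _].
  destruct (Rle_dec (x j) (1/3)) as [| Hj3]; [assumption | exfalso].
  assert (x j < x (r + 1)%nat) by (apply is_P_lt; lia).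
  assert (x (j + p)%nat <= x q) by (apply is_P_le; lia).
  pose proof is_P_max_image as Hq; rewrite H2_I1 in Hq by lra.
  pose proof (is_P_orbit j ltac:(lia)) as Hjp; rewrite H2_I1, Pi_I0 in Hjp by (lra || lia).
  lra.
Qed.

Lemma is_P_I1 j : (r + 1 <= j <= r + 2 * p - 1)%nat -> 1/3 <= x j <= 2/3.
Proof.
  intros Hj; destruct is_P_extrema_location as [[HM1 HM2] [Hm _]].
  assert (x (r + 1)%nat <= x j) by (apply is_P_le; lia).
  split; [lra |].
  destruct (Nat.eq_dec j (r + 1)) as [-> | Hj1]; [assumption |].
  (* Otherwise p >= 2; were x_{r+2p-1} in I_2, the increasing branch would send
     x_{r+2p-1} < x_{r+2p} to x_2 < x_1. *)
  set (j' := (r + 2 * p - 1)%nat).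
  assert (x j <= x j') by (apply is_P_le; lia).
  destruct (Rle_dec (x j') (2/3)) as [| Hj']; [lra | exfalso].
  pose proof (is_P_orbit j' ltac:(lia)) as H2j'; rewrite H2_I2, Pi_refl2 in H2j' by (lra || lia).
  replace (2 * p + r + 1 - j')%nat with 2%nat in H2j' by lia.
  pose proof is_P_min_image as H2m; rewrite H2_I2 in H2m by lra.
  assert (x j' < x (r + 2 * p)%nat) by (apply is_P_lt; lia).
  assert (x 1%nat < x 2%nat) by (apply is_P_lt; lia).
  lra.
Qed.

Lemma is_P_I2 j : (r + 2 * p <= j <= q)%nat -> 2/3 <= x j.
Proof.
  intros Hj; destruct is_P_extrema_location as [_ [Hm _]].
  assert (x (r + 2 * p)%nat <= x j) by (apply is_P_le; lia). lra.
Qed.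

Lemma is_P_shape : overtwist_shape q p r x.
Proof.
  destruct Px as [[bound [incr _]] _].
  destruct is_P_extrema_location as [[HM _] [Hm _]].
  constructor; auto.
  - intros j Hj; rewrite <- Pi_I0 with (q := q) (r := r), <- is_P_orbit by lia.
    apply H2_I0, is_P_I0; lia.
  - intros j Hj; rewrite <- Pi_refl1 with (p := p), <- is_P_orbit by lia.
    apply H2_I1, is_P_I1; lia.
  - intros j Hj; rewrite <- Pi_refl2 with (q := q), <- is_P_orbit by lia.
    apply H2_I1, is_P_I1; lia.
  - intros j Hj; rewrite <- Pi_I2 with (q := q) (r := r), <- is_P_orbit by lia.
    apply H2_I2, is_P_I2; lia.
  - rewrite <- is_P_min_image; apply H2_I2; lra.
Qed.

End CycleShape.

Local Coercion Z.of_nat : nat >-> Z.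

Lemma congr_window_eq (p : nat) (c a b : Z) :
  (p | a - b)%Z -> (c <= a < c + p)%Z -> (c <= b < c + p)%Z -> a = b.
Proof.
  intros [u Hu] Ha Hb.
  destruct (Z.lt_trichotomy u 0) as [Hneg | [-> | Hpos]]; nia.
Qed.

Lemma coprime_congr_solvable (p q : nat) (c : Z) :
  (0 < p)%nat -> Nat.gcd p q = 1%nat -> exists n : nat, (p | n * q - c)%Z.
Proof.
  intros Hp Hg.
  destruct (Nat.gcd_bezout_pos p q Hp) as (u & v & Huv); rewrite Hg in Huv.
  set (N := ((- (c * v)) mod p)%Z).
  assert (HN : (N = - (c * v) - p * (- (c * v) / p))%Z)
    by (unfold N; rewrite Z.mod_eq; lia).
  exists (Z.to_nat N); rewrite Z2Nat.id by (apply Z.mod_pos_bound; lia).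
  exists (- (c * u) - (- (c * v) / p) * q)%Z.
  assert (Huv' : (u * p = v * q + 1)%Z) by lia.
  assert (Hc : (c * (u * p) = c * (v * q + 1))%Z) by (rewrite Huv'; reflexivity).
  rewrite HN; lia.
Qed.

Section Walks.

Variables (p : nat) (P : nat -> Prop).
Hypothesis p_pos : (0 < p)%nat.

Lemma walk_up (lo a : nat) :
  (forall s, (lo <= s < a)%nat -> P (s + p) -> P s) ->
  forall s, (lo <= s < a + p)%nat ->
  exists l, (a <= l < a + p)%nat /\ (p | l - s)%Z /\ (P l -> P s).
Proof.
  intros step s.
  induction s as [s IH]
    using (well_founded_induction (well_founded_ltof _ (fun s : nat => (a - s)%nat))).
  intros Hs; destruct (Nat.lt_ge_cases s a) as [Hsa | Hsa].
  - destruct (IH (s + p)%nat) as (l & Hl & [u Hu] & HP); [unfold ltof; lia | lia |].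
    exists l; split; [lia | split; [exists (u + 1)%Z; lia | intro; apply step; auto; lia]].
  - exists s; split; [lia | split; [exists 0%Z; lia | auto]].
Qed.

Lemma walk_down (a hi : nat) :
  (forall t, (a + p <= t <= hi)%nat -> P (t - p) -> P t) ->
  forall t, (a <= t <= hi)%nat ->
  exists l, (a <= l < a + p)%nat /\ (p | l - t)%Z /\ (P l -> P t).
Proof.
  intros step t.
  induction t as [t IH] using lt_wf_ind.
  intros Ht; destruct (Nat.lt_ge_cases t (a + p)) as [Hta | Hta].
  - exists t; split; [lia | split; [exists 0%Z; lia | auto]].
  - destruct (IH (t - p)%nat) as (l & Hl & [u Hu] & HP); [lia | lia |].
    exists l; split; [lia | split; [exists (u - 1)%Z; lia | intro; apply step; auto; lia]].
Qed.

End Walks.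

(* [E j] stands for the comparison y_j < x_j and [S i] for x_i < y_{i+1};
   each rule derives one of them from the comparison of the images. *)
Set Implicit Arguments.
Record comparison_rules (p q r : nat) (E S : nat -> Prop) : Prop := {
  E_I0 : forall j, (1 <= j <= r)%nat -> E (j + p)%nat -> E j;
  E_refl1 : forall j, (r + 2 <= j <= r + p)%nat -> S (q - j + r + 1)%nat -> E j;
  E_refl2 : forall j, (r + p + 2 <= j <= r + 2 * p - 1)%nat -> S (2 * p + r + 1 - j)%nat -> E j;
  E_I2 : forall j, (r + 2 * p + 2 <= j <= q)%nat -> E (j - p)%nat -> E j;
  S_I0 : forall i, (1 <= i <= r)%nat -> S (i + p)%nat -> S i;
  S_refl1 : forall i, (r + 1 <= i <= r + p)%nat -> E (q - i + r + 1)%nat -> S i;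
  S_refl2 : forall i, (r + p + 1 <= i <= r + 2 * p - 1)%nat -> E (2 * p + r + 1 - i)%nat -> S i;
  S_I2 : forall i, (r + 2 * p + 1 <= i <= q - 1)%nat -> S (i - p)%nat -> S i;
  E_at_max : E (r + 1)%nat;
  E_at_min : E (r + 2 * p)%nat;
  E_after_min : E (r + 2 * p + 1)%nat }.
Unset Implicit Arguments.

Section Comparison.

Variables (p q k : nat) (x y : nat -> R).
Hypotheses (p_pos : (0 < p)%nat) (q_large : (k + 2 * p + 2 <= q)%nat).
Hypotheses (Sx : overtwist_shape q p k x) (Sy : overtwist_shape q p (k + 1) y).

Lemma y_lt_x_at_max : y (k + 1)%nat < x (k + 1)%nat.
Proof.
  pose proof (shape_I0 Sy (j := (k + 1)%nat) ltac:(lia)).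
  assert (y (k + 1 + p)%nat < y q) by (apply (shape_incr Sy); lia).
  assert (y q <= 1) by (apply (shape_bound Sy); lia).
  pose proof (shape_max_I1 Sx). lra.
Qed.

Lemma y_lt_x_at_min : y (k + 2 * p)%nat < x (k + 2 * p)%nat.
Proof.
  assert (0 <= y 1%nat) by (apply (shape_bound Sy); lia).
  pose proof (shape_min_I2 Sx).
  destruct (Nat.eq_dec p 1) as [-> | Hp].
  - pose proof (shape_refl1 Sy (j := (k + 2)%nat) ltac:(lia)) as Hy.
    replace (q - (k + 2) + (k + 1) + 1)%nat with q in Hy by lia.
    assert (y 1%nat < y q) by (apply (shape_incr Sy); lia).
    replace (k + 2 * 1)%nat with (k + 2)%nat in * by lia. lra.
  - pose proof (shape_refl2 Sy (j := (k + 2 * p)%nat) ltac:(lia)) as Hy.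
    replace (2 * p + (k + 1) + 1 - (k + 2 * p))%nat with 2%nat in Hy by lia.
    assert (y 1%nat < y 2%nat) by (apply (shape_incr Sy); lia). lra.
Qed.

Lemma y_lt_x_after_min : y (k + 2 * p + 1)%nat < x (k + 2 * p + 1)%nat.
Proof.
  pose proof (shape_I2 Sx (j := (k + 2 * p + 1)%nat) ltac:(lia)) as Hx.
  replace (k + 2 * p + 1 - p)%nat with (k + p + 1)%nat in Hx by lia.
  assert (x (k + 1)%nat <= x (k + p + 1)%nat) by (left; apply (shape_incr Sx); lia).
  pose proof (shape_max_I1 Sx).
  pose proof (shape_min Sy) as Hy.
  pose proof (shape_I0 Sy (j := 1%nat) ltac:(lia)).
  assert (y (1 + p)%nat < y q) by (apply (shape_incr Sy); lia).
  assert (y q <= 1) by (apply (shape_bound Sy); lia).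
  replace (k + 1 + 2 * p)%nat with (k + 2 * p + 1)%nat in Hy by lia.
  lra.
Qed.

Lemma shapes_comparison_rules :
  comparison_rules p q k (fun j => y j < x j) (fun i => x i < y (i + 1)%nat).
Proof.
  constructor;
    [intros j Hj H; cbv beta in * .. | exact y_lt_x_at_max | exact y_lt_x_at_min
    | exact y_lt_x_after_min].
  - rewrite (shape_I0 Sx), (shape_I0 Sy) in H by lia; lra.
  - replace (q - j + k + 1 + 1)%nat with (q - j + (k + 1) + 1)%nat in H by lia.
    rewrite (shape_refl1 Sx), (shape_refl1 Sy) in H by lia; lra.
  - replace (2 * p + k + 1 - j + 1)%nat with (2 * p + (k + 1) + 1 - j)%nat in H by lia.
    rewrite (shape_refl2 Sx), (shape_refl2 Sy) in H by lia; lra.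
  - rewrite (shape_I2 Sx), (shape_I2 Sy) in H by lia; lra.
  - replace (j + p + 1)%nat with (j + 1 + p)%nat in H by lia.
    rewrite (shape_I0 Sx), (shape_I0 Sy) in H by lia; lra.
  - rewrite (shape_refl1 Sx) in H by lia.
    replace (q - j + k + 1)%nat with (q - (j + 1) + (k + 1) + 1)%nat in H by lia.
    rewrite (shape_refl1 Sy) in H by lia; lra.
  - rewrite (shape_refl2 Sx) in H by lia.
    replace (2 * p + k + 1 - j)%nat with (2 * p + (k + 1) + 1 - (j + 1))%nat in H by lia.
    rewrite (shape_refl2 Sy) in H by lia; lra.
  - replace (j - p + 1)%nat with (j + 1 - p)%nat in H by lia.
    rewrite (shape_I2 Sx), (shape_I2 Sy) in H by lia; lra.
Qed.

End Comparison.

Section Propagation.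

Local Open Scope nat_scope.

Variables (p q r : nat) (E S : nat -> Prop).
Hypotheses (p_pos : 0 < p) (q_large : r + 2 * p + 2 <= q).
Hypothesis rules : comparison_rules p q r E S.

Lemma top_descent t : q - p < t <= q ->
  exists l, r + p + 2 <= l <= r + 2 * p + 1 /\ (p | l - t)%Z /\ (E l -> E t).
Proof.
  intros Ht; destruct (walk_down p E p_pos (r + p + 2) q) with (t := t)
    as (l & Hl & Hlt & HE); [intros; apply (E_I2 rules); auto; lia | lia |].
  exists l; split; [lia | auto].
Qed.

Lemma top_landing t : q - p < t <= q -> (p | t - (r + 1))%Z -> E t.
Proof.
  intros Ht [v Hv].
  destruct (top_descent t Ht) as (l & Hl & [u Hu] & HE); apply HE.
  replace l with (r + 2 * p + 1); [exact (E_after_min rules) |].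
  apply Nat2Z.inj, (congr_window_eq p (r + p + 2)); [exists (- u - v + 2)%Z | |]; lia.
Qed.

Lemma top_round t : q - p < t <= q ->
  (forall t', q - p < t' <= q -> (p | t' - (t + q))%Z -> E t') -> E t.
Proof.
  intros Ht next.
  destruct (top_descent t Ht) as (l & Hl & [u Hu] & HE); apply HE.
  destruct (Nat.lt_ge_cases l (r + 2 * p)) as [Hl2 | Hl2].
  2: { assert (l = r + 2 * p \/ l = r + 2 * p + 1) as [-> | ->] by lia;
       [exact (E_at_min rules) | exact (E_after_min rules)]. }
  apply (E_refl2 rules); [lia |].
  destruct (walk_up p S p_pos 1 (r + 1)) with (s := 2 * p + r + 1 - l)
    as (l' & Hl' & [v Hv] & HS); [intros; apply (S_I0 rules); auto; lia | lia |].
  apply HS, (S_refl1 rules); [lia |].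
  apply next; [lia |]. exists (u - v - 2)%Z; lia.
Qed.

Lemma top_rounds (m : nat) : forall t, q - p < t <= q -> (p | t + m * q - (r + 1))%Z -> E t.
Proof.
  induction m as [| m IH]; intros t Ht [u Hu].
  - apply top_landing; [lia |]. exists u; lia.
  - apply top_round; [lia |]. intros t' Ht' [v Hv].
    apply IH; [lia |]. exists (u + v)%Z; lia.
Qed.

Lemma comparison_at_top : Nat.gcd p q = 1 -> E q.
Proof.
  intros Hg.
  destruct (coprime_congr_solvable p q (r + 1 - q)%Z) as [m [u Hu]]; [lia | auto |].
  apply (top_rounds m); [lia |]. exists u; lia.
Qed.

Lemma bottom_ascent s : 1 <= s <= p ->
  exists l, r + 1 <= l <= r + p /\ (p | l - s)%Z /\ (E l -> E s).
Proof.
  intros Hs; destruct (walk_up p E p_pos 1 (r + 1)) with (s := s)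
    as (l & Hl & Hls & HE); [intros; apply (E_I0 rules); auto; lia | lia |].
  exists l; split; [lia | auto].
Qed.

Lemma bottom_landing s : 1 <= s <= p -> (p | s - (r + 1))%Z -> E s.
Proof.
  intros Hs [v Hv].
  destruct (bottom_ascent s Hs) as (l & Hl & [u Hu] & HE); apply HE.
  replace l with (r + 1); [exact (E_at_max rules) |].
  apply Nat2Z.inj, (congr_window_eq p (r + 1)); [exists (- u - v)%Z | |]; lia.
Qed.

(* [not_last] excludes the one residue whose round would reach the pair
   (x_{r+2p}, y_{r+2p+1}); the increasing branch sends that pair to (x_1, y_1),
   so [S] there would need x_1 < y_1, the opposite of what is being proved. *)
Lemma bottom_round s : 1 <= s <= p -> ~ (p | s - (q + 1))%Z ->
  (forall s', 1 <= s' <= p -> (p | s' - (s - q))%Z -> E s') -> E s.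
Proof.
  intros Hs not_last next.
  destruct (bottom_ascent s Hs) as (l & Hl & [u Hu] & HE); apply HE.
  destruct (Nat.eq_dec l (r + 1)) as [-> | Hl1]; [exact (E_at_max rules) |].
  apply (E_refl1 rules); [lia |].
  destruct (walk_down p S p_pos (r + p + 1) (q - 1)) with (t := q - l + r + 1)
    as (l' & Hl' & [v Hv] & HS); [intros; apply (S_I2 rules); auto; lia | lia |].
  apply HS.
  destruct (Nat.eq_dec l' (r + 2 * p)) as [Hlast | Hl2].
  - exfalso; apply not_last; exists (v - u - 2)%Z; lia.
  - apply (S_refl2 rules); [lia |].
    apply next; [lia |]. exists (u - v + 2)%Z; lia.
Qed.

Lemma bottom_rounds (m : nat) : (forall j, j < m -> ~ (p | j * q + r)%Z) ->
  forall s, 1 <= s <= p -> (p | s - (r + 1 + m * q))%Z -> E s.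
Proof.
  induction m as [| m IH]; intros below s Hs [u Hu].
  - apply bottom_landing; [lia |]. exists u; lia.
  - apply bottom_round; [lia | |].
    + intros [v Hv]; apply (below m); [lia |]. exists (v - u)%Z; lia.
    + intros s' Hs' [v Hv]. apply IH; [intros j Hj; apply below; lia | lia |].
      exists (u + v)%Z; lia.
Qed.

Lemma comparison_at_bottom : Nat.gcd p q = 1 -> E 1.
Proof.
  intros Hg.
  destruct (coprime_congr_solvable p q (- r)%Z) as [n Hn]; [lia | auto |].
  (* Taking the least number of rounds keeps every earlier round away from the
     excluded residue of [bottom_round]. *)
  destruct (dec_inh_nat_subset_has_unique_least_element (fun m => (p | m * q + r)%Z))
    as (m & [[u Hu] least] & _).
  - intros m; destruct (Zdivide_dec p (m * q + r)); auto.
  - exists n; replace (n * q + r)%Z with (n * q - - r)%Z by lia; exact Hn.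
  - apply (bottom_rounds m); [| lia |].
    + intros j Hj Hdiv; specialize (least j Hdiv); lia.
    + exists (- u)%Z; lia.
Qed.

End Propagation.

Theorem mainTheorem12 (p q k : nat) (xk xk1 : nat -> R) (Mk Mk1 mk mk1 : R) :
  (0 < p)%nat -> (0 < q)%nat -> Nat.gcd p q = 1%nat -> (2 * p < q)%nat ->
  (1 <= k)%nat -> (k <= q - 2 * p - 2)%nat ->
  is_P q p k xk -> is_P q p (k + 1) xk1 ->
  abs_max_pt q xk Mk -> abs_min_pt q xk mk ->
  abs_max_pt q xk1 Mk1 -> abs_min_pt q xk1 mk1 ->
  H2 Mk > H2 Mk1 /\ H2 mk > H2 mk1.
Proof.
  intros Hp _ Hg Hpq Hk1 Hk2 Pk Pk1 (_ & _ & _ & ->) (_ & _ & _ & ->) (_ & _ & _ & ->) (_ & _ & _ & ->).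
  pose proof (is_P_shape q p k xk ltac:(lia) Hk1 ltac:(lia) Pk) as Sk.
  pose proof (is_P_shape q p (k + 1) xk1 ltac:(lia) ltac:(lia) ltac:(lia) Pk1) as Sk1.
  pose proof (shapes_comparison_rules p q k xk xk1 ltac:(lia) ltac:(lia) Sk Sk1) as rules.
  split.
  - exact (comparison_at_top p q k _ _ ltac:(lia) ltac:(lia) rules Hg).
  - exact (comparison_at_bottom p q k _ _ ltac:(lia) ltac:(lia) rules Hg).
Qed.
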